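(* For $\alpha\in\mathbb R\setminus\{0\}$ let $\phi_\alpha:\mathbb R\to\mathbb R$ be $\phi_\alpha(x)=x^\alpha$ for $x\ge0$ and $\phi_\alpha(x)=-(-x)^\alpha$ for $x<0$ (with $\phi_\alpha(0)=0$), and let $x+_{\phi_\alpha}y=\phi_\alpha^{-1}(\phi_\alpha(x)+\phi_\alpha(y))$. Let $P=\prod_{\alpha\in\mathbb R\setminus\{0\}}\mathbb R$ be the full direct product, with addition $(x_\alpha)+(y_\alpha)=(x_\alpha+_{\phi_\alpha}y_\alpha)$ and scalar multiplication $\lambda(x_\alpha)=(\lambda x_\alpha)$, $\lambda\in\mathbb R$. Then the quasi-kernel of $P$ is $Q(P)=\bigcup_{\alpha\in\mathbb R\setminus\{0\}}\mathbb R\mathbf e_\alpha$, where $\mathbf e_\alpha=(\delta_{\alpha,\beta})_{\beta}$, and consequently $P$ is not a near-vector space over $\mathbb R$.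
   Context: Here $\mathbb R$ is regarded as the scalar group $(\mathbb R,\cdot,1,0,-1)$. For an abelian group $V$ with an action of $(\mathbb R,\cdot)$ by endomorphisms, the quasi-kernel is $Q(V)=\{u:\forall a,b\in\mathbb R\ \exists\gamma\in\mathbb R,\ au+bu=\gamma u\}$. A near-vector space over $\mathbb R$ is such a $V$ in which $0,1,-1$ act as $0,\mathrm{id},-\mathrm{id}$, the action is free (for $u\ne0$, $au=bu\Rightarrow a=b$), and $Q(V)$ generates $V$ as an additive group. $\delta_{\alpha,\beta}$ is $1$ if $\alpha=\beta$ and $0$ otherwise. *)

From Stdlib Require Import Reals.
Open Scope R_scope.

Section General.
Variables (V : Type) (add : V -> V -> V) (zero : V) (neg : V -> V)
          (smul : R -> V -> V).

Definition quasi_kernel (u : V) : Prop :=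
  forall a b : R, exists g : R, add (smul a u) (smul b u) = smul g u.

Inductive gen_subgroup (S : V -> Prop) : V -> Prop :=
| gs_zero : gen_subgroup S zero
| gs_in : forall u, S u -> gen_subgroup S u
| gs_neg : forall u, gen_subgroup S u -> gen_subgroup S (neg u)
| gs_add : forall u v, gen_subgroup S u -> gen_subgroup S v ->
           gen_subgroup S (add u v).

Definition near_vector_space : Prop :=
  (forall u v w, add u (add v w) = add (add u v) w) /\
  (forall u v, add u v = add v u) /\
  (forall u, add zero u = u) /\
  (forall u, add (neg u) u = zero) /\
  (forall a u v, smul a (add u v) = add (smul a u) (smul a v)) /\
  (forall a b u, smul (a * b) u = smul a (smul b u)) /\
  (forall u, smul 0 u = zero) /\
  (forall u, smul 1 u = u) /\
  (forall u, smul (-1) u = neg u) /\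
  (forall u a b, u <> zero -> smul a u = smul b u -> a = b) /\
  (forall v, gen_subgroup quasi_kernel v).
End General.

Definition phi (alpha x : R) : R :=
  if Rlt_dec 0 x then Rpower x alpha
  else if Rlt_dec x 0 then - Rpower (- x) alpha else 0.

Definition phi_inv (alpha y : R) : R := phi (/ alpha) y.

Definition phi_add (alpha x y : R) : R := phi_inv alpha (phi alpha x + phi alpha y).

Definition nzR := {a : R | a <> 0}.
Definition P := nzR -> R.

Definition addP (x y : P) : P := fun a => phi_add (proj1_sig a) (x a) (y a).
Definition zeroP : P := fun _ => 0.
Definition negP (x : P) : P := fun a => - x a.
Definition smulP (l : R) (x : P) : P := fun a => l * x a.

Definition e (alpha : nzR) : P :=
  fun beta => if Req_EM_T (proj1_sig alpha) (proj1_sig beta) then 1 else 0.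

From Stdlib Require Import Reals Lra List Classical FunctionalExtensionality ProofIrrelevance.
Open Scope R_scope.

(* Since phi_alpha is multiplicative, on the alpha-th coordinate
   a x +_{phi_alpha} b x = (a +_{phi_alpha} b) x, and 1 +_{phi_alpha} 1 = 2^(1/alpha)
   determines alpha.  Applying the quasi-kernel condition with a = b = 1 to a
   vector u therefore forces all nonzero coordinates of u to share one index.
   So the subgroup generated by Q(P) consists of finitely supported vectors and
   misses the constant vector 1. *)

Lemma phi_pos a x : 0 < x -> phi a x = Rpower x a.
Proof. intro Hx; unfold phi; destruct (Rlt_dec 0 x); [reflexivity | lra]. Qed.

Lemma phi_0 a : phi a 0 = 0.
Proof. unfold phi; destruct (Rlt_dec 0 0); [lra |]; destruct (Rlt_dec 0 0); [lra | reflexivity]. Qed.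

Lemma phi_opp a x : phi a (- x) = - phi a x.
Proof.
  unfold phi; rewrite Ropp_involutive.
  destruct (Rlt_dec 0 (- x)), (Rlt_dec 0 x), (Rlt_dec (- x) 0), (Rlt_dec x 0);
    solve [ring | lra].
Qed.

Lemma phi_mul_nonneg a x y : 0 <= x -> 0 <= y -> phi a (x * y) = phi a x * phi a y.
Proof.
  intros Hx Hy.
  destruct Hx as [Hx | <-]; [| now rewrite Rmult_0_l, !phi_0, Rmult_0_l].
  destruct Hy as [Hy | <-]; [| now rewrite Rmult_0_r, !phi_0, Rmult_0_r].
  rewrite !phi_pos by (try apply Rmult_lt_0_compat; assumption).
  now rewrite Rpower_mult_distr.
Qed.

Lemma phi_mul a x y : phi a (x * y) = phi a x * phi a y.
Proof.
  destruct (Rle_or_lt 0 x) as [Hx | Hx], (Rle_or_lt 0 y) as [Hy | Hy].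
  - now apply phi_mul_nonneg.
  - replace (x * y) with (- (x * - y)) by ring.
    rewrite phi_opp, phi_mul_nonneg, phi_opp by lra; ring.
  - replace (x * y) with (- (- x * y)) by ring.
    rewrite phi_opp, phi_mul_nonneg, phi_opp by lra; ring.
  - replace (x * y) with (- x * - y) by ring.
    rewrite phi_mul_nonneg, !phi_opp by lra; ring.
Qed.

Lemma phi_inv_phi a x : a <> 0 -> phi_inv a (phi a x) = x.
Proof.
  intro Ha; unfold phi_inv.
  assert (Hnonneg : forall y, 0 <= y -> phi (/ a) (phi a y) = y).
  { intros y [Hy | <-]; [| now rewrite !phi_0].
    rewrite (phi_pos a) by exact Hy.
    rewrite phi_pos by apply exp_pos.
    rewrite Rpower_mult, Rinv_r by exact Ha.
    now apply Rpower_1. }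
  destruct (Rle_or_lt 0 x) as [Hx | Hx]; [now apply Hnonneg |].
  replace (phi a x) with (- phi a (- x)) by (rewrite phi_opp; ring).
  rewrite phi_opp, Hnonneg by lra; ring.
Qed.

Lemma phi_add_0 al : phi_add al 0 0 = 0.
Proof. unfold phi_add, phi_inv; now rewrite !phi_0, Rplus_0_r, phi_0. Qed.

Lemma phi_add_homog al a b x : al <> 0 -> phi_add al (a * x) (b * x) = phi_add al a b * x.
Proof.
  intro Hal; unfold phi_add.
  rewrite !phi_mul, <- Rmult_plus_distr_r.
  unfold phi_inv; rewrite phi_mul; fold (phi_inv al (phi al x)).
  now rewrite phi_inv_phi.
Qed.

Lemma phi_add_1_1 al : phi_add al 1 1 = Rpower 2 (/ al).
Proof.
  unfold phi_add, phi_inv.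
  rewrite (phi_pos al 1) by lra.
  replace (Rpower 1 al) with 1 by (unfold Rpower; now rewrite ln_1, Rmult_0_r, exp_0).
  now rewrite phi_pos by lra.
Qed.

Lemma phi_add_1_1_inj al be : al <> 0 -> be <> 0 ->
  phi_add al 1 1 = phi_add be 1 1 -> al = be.
Proof.
  intros Hal Hbe H; rewrite !phi_add_1_1 in H; apply exp_inv in H.
  assert (Hln2 : 0 < ln 2) by (pose proof ln_lt_2; lra).
  rewrite <- (Rinv_inv al), <- (Rinv_inv be); f_equal.
  now apply Rmult_eq_reg_r with (ln 2); [| lra].
Qed.

Lemma nzR_eq (a b : nzR) : proj1_sig a = proj1_sig b -> a = b.
Proof. apply eq_sig_hprop; intros; apply proof_irrelevance. Qed.

Definition one_nz : nzR := exist _ 1 R1_neq_R0.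

Lemma quasi_kernel_support (u : P) : quasi_kernel P addP smulP u ->
  forall a b : nzR, u a <> 0 -> u b <> 0 -> a = b.
Proof.
  intros HQ a b Ha Hb; destruct (HQ 1 1) as [g Hg].
  assert (Hcoord : forall c : nzR, u c <> 0 -> phi_add (proj1_sig c) 1 1 = g).
  { intros c Hc; pose proof (equal_f Hg c) as Hgc; unfold addP, smulP in Hgc.
    rewrite phi_add_homog in Hgc by apply proj2_sig.
    now apply Rmult_eq_reg_r in Hgc. }
  apply nzR_eq, phi_add_1_1_inj; try apply proj2_sig.
  now rewrite (Hcoord a Ha), (Hcoord b Hb).
Qed.

Lemma single_support_eq_smul_e (u : P) (a : nzR) :
  (forall b, u b <> 0 -> b = a) -> u = smulP (u a) (e a).
Proof.
  intro Hsupp; extensionality b; unfold smulP, e.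
  destruct Req_EM_T as [E | E].
  - rewrite (nzR_eq a b E); ring.
  - rewrite Rmult_0_r; apply NNPP; intro Hb.
    apply E; now rewrite (Hsupp b Hb).
Qed.

Lemma smul_e_quasi_kernel (al : nzR) (c : R) : quasi_kernel P addP smulP (smulP c (e al)).
Proof.
  intros a b; exists (phi_add (proj1_sig al) a b); extensionality be.
  unfold addP, smulP.
  rewrite phi_add_homog by apply proj2_sig.
  unfold e; destruct Req_EM_T as [-> | _]; [reflexivity | now rewrite !Rmult_0_r].
Qed.

Lemma quasi_kernel_char (u : P) :
  quasi_kernel P addP smulP u <-> exists (alpha : nzR) (c : R), u = smulP c (e alpha).
Proof.
  split; [| intros (al & c & ->); apply smul_e_quasi_kernel].
  intro HQ.
  assert (Hsupp : exists a, forall b, u b <> 0 -> b = a).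
  { destruct (classic (exists a, u a <> 0)) as [[a Ha] | Hnone].
    - exists a; intros b Hb; exact (quasi_kernel_support u HQ b a Hb Ha).
    - exists one_nz; intros b Hb; exfalso; eauto. }
  destruct Hsupp as [a Ha]; exists a, (u a).
  now apply single_support_eq_smul_e.
Qed.

Definition finite_support (u : P) : Prop :=
  exists L : list R, forall b : nzR, ~ In (proj1_sig b) L -> u b = 0.

Lemma gen_quasi_kernel_finite_support (u : P) :
  gen_subgroup P addP zeroP negP (quasi_kernel P addP smulP) u -> finite_support u.
Proof.
  induction 1 as [| u Hu | u _ [L HL] | u v _ [L1 H1] _ [L2 H2]].
  - exists nil; reflexivity.
  - apply quasi_kernel_char in Hu as (al & c & ->).
    exists (proj1_sig al :: nil); intros b Hb; unfold smulP, e.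
    destruct Req_EM_T as [E | _]; [exfalso; apply Hb; now left | ring].
  - exists L; intros b Hb; unfold negP; rewrite HL by exact Hb; ring.
  - exists (L1 ++ L2); intros b Hb; unfold addP.
    rewrite H1, H2 by (intro; apply Hb, in_or_app; auto).
    apply phi_add_0.
Qed.

Lemma list_upper_bound (L : list R) : exists M, 0 < M /\ forall x, In x L -> x < M.
Proof.
  induction L as [| a L [M [HM HL]]].
  - exists 1; split; [lra | intros x []].
  - exists (Rmax M (a + 1)); split; [apply Rlt_le_trans with M; [lra | apply Rmax_l] |].
    intros x [<- | Hx].
    + apply Rlt_le_trans with (a + 1); [lra | apply Rmax_r].
    + apply Rlt_le_trans with M; [now apply HL | apply Rmax_l].
Qed.

Lemma const_one_not_finite_support : ~ finite_support (fun _ => 1).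
Proof.
  intros [L HL]; destruct (list_upper_bound L) as [M [HM HLM]].
  assert (HM0 : M <> 0) by lra.
  assert (HMnotin : ~ In M L) by (intro Hin; apply HLM in Hin; lra).
  pose proof (HL (exist _ M HM0) HMnotin); lra.
Qed.

Theorem mainTheorem12 :
  (forall u : P,
     quasi_kernel P addP smulP u <->
     exists (alpha : nzR) (c : R), u = smulP c (e alpha)) /\
  ~ near_vector_space P addP zeroP negP smulP.
Proof.
  split; [exact quasi_kernel_char |].
  intros (_ & _ & _ & _ & _ & _ & _ & _ & _ & _ & Hgen).
  apply const_one_not_finite_support, gen_quasi_kernel_finite_support, Hgen.
Qed.
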